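(* Let $B_0,B_1\subset\mathbb Z^k$ be $k$-dimensional boxes of size $1$, let $\bar S\subset\mathbb Q^k$ be the convex hull of $B_0\cup B_1$ in $\mathbb Q^k$, and let $S=\bar S\cap\mathbb Z^k$. Then $S$ is lattice path connected.
   Context: A $k$-dimensional box of size $1$ is $\{\vec z\in\mathbb Z^k: c_i\le z_i\le c_i+1,\ i=1,\dots,k\}$ for some $c_i\in\mathbb Z$. A lattice path is a sequence $(T_i)_{i\ge1}$ in $\mathbb Z^k$ with $T_i-T_{i-1}\in\{\pm\vec e_1,\dots,\pm\vec e_k\}$ for all $i>1$. A set $S\subset\mathbb Z^k$ is lattice path connected if for all $\vec z_1,\vec z_2\in S$ there is a lattice path contained in $S$ with $T_1=\vec z_1$ and $T_i=\vec z_2$ for some $i\ge1$. *)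

From mathcomp Require Import all_boot all_order all_algebra.
Set Implicit Arguments. Unset Strict Implicit. Unset Printing Implicit Defensive.
Import Order.TTheory GRing.Theory Num.Theory.
Local Open Scope ring_scope.

Definition box (k : nat) (c : 'rV[int]_k) : pred 'rV[int]_k :=
  fun z => [forall i, (c 0 i <= z 0 i) && (z 0 i <= c 0 i + 1)].

Definition toQ (k : nat) (z : 'rV[int]_k) : 'rV[rat]_k := map_mx intr z.

Definition in_conv_hull (k : nat) (A : 'rV[int]_k -> Prop) (x : 'rV[rat]_k) : Prop :=
  exists (n : nat) (lam : 'I_n -> rat) (p : 'I_n -> 'rV[int]_k),
    (forall i, 0 <= lam i) /\ (forall i, A (p i)) /\
    \sum_(i < n) lam i = 1 /\
    \sum_(i < n) lam i *: toQ (p i) = x.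

Definition lattice_step (k : nat) (a b : 'rV[int]_k) : Prop :=
  exists j : 'I_k, b - a = delta_mx 0 j \/ b - a = - delta_mx 0 j.

Fixpoint lattice_path (k : nat) (x : 'rV[int]_k) (s : seq 'rV[int]_k) : Prop :=
  match s with
  | [::] => True
  | y :: s' => lattice_step x y /\ lattice_path y s'
  end.

Definition lattice_path_connected (k : nat) (S : 'rV[int]_k -> Prop) : Prop :=
  forall z1 z2, S z1 -> S z2 ->
    exists s : seq 'rV[int]_k,
      lattice_path z1 s /\ (forall y, y \in z1 :: s -> S y) /\ z2 \in z1 :: s.

(* A point z lies in the convex hull of B0 u B1 exactly when it lies in one of
   the unit boxes whose corner c1 + l (c0 - c1), 0 <= l <= 1, slides along the
   segment from c1 to c0: a convex combination gives l as the weight carried by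
   B0, and conversely a point of such a box is a product-weight combination of
   the corners of B0 and B1.  Every z != c1 of the hull has a neighbour in the
   hull that is closer to c1 in the l1 distance: push l down to the least
   parameter still admitting z; if it is positive some coordinate of z sits on
   the boundary of its box and can be stepped inwards, and if it is zero then z
   lies in B1 and steps towards c1 inside B1.  Descent on the distance joins
   every point of the hull to c1. *)

From mathcomp Require Import all_boot all_order all_algebra.
From mathcomp Require Import ring lra zify.
Import Order.TTheory GRing.Theory Num.Theory.
Set Implicit Arguments. Unset Strict Implicit.
Local Open Scope ring_scope.

Lemma in_conv_hull_finType k (A : 'rV[int]_k -> Prop) (T : finType)
    (lam : T -> rat) (p : T -> 'rV[int]_k) x :
  (forall t, 0 <= lam t) -> (forall t, A (p t)) -> \sum_t lam t = 1 ->
  \sum_t lam t *: toQ (p t) = x -> in_conv_hull A x.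
Proof.
move=> lam_ge0 Ap lam_sum1 px.
exists #|T|, (fun i => lam (enum_val i)), (fun i => p (enum_val i)).
do !split=> //.
  by rewrite -(big_enum_val (A:=T) lam) -lam_sum1; apply: eq_bigl => t; rewrite inE.
rewrite -(big_enum_val (A:=T) (fun t => lam t *: toQ (p t))) -px.
by apply: eq_bigl => t; rewrite inE.
Qed.

Lemma sumr_mul_if (R : comNzRingType) (I : finType) (lam : I -> R)
    (b : pred I) (x y : R) :
  \sum_i lam i = 1 ->
  \sum_i lam i * (if b i then x else y) = y + (\sum_(i | b i) lam i) * (x - y).
Proof.
move=> lam_sum1.
transitivity (\sum_i (lam i * y + (if b i then lam i else 0) * (x - y))).
  by apply: eq_bigr => i _; case: (b i); ring.
by rewrite big_split /= -mulr_suml lam_sum1 mul1r -mulr_suml -big_mkcond.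
Qed.

Section CubeWeight.

Variables (R : comNzRingType) (k : nat) (t : 'I_k -> R).

Definition cube_weight (f : {ffun 'I_k -> bool}) : R :=
  \prod_i (if f i then t i else 1 - t i).

Lemma sum_cube_weight : \sum_f cube_weight f = 1.
Proof.
rewrite /cube_weight -(bigA_distr_bigA (fun i (b : bool) => if b then t i else 1 - t i)).
by apply: big1 => i _; rewrite big_bool /= addrC subrK.
Qed.

Lemma sum_cube_weight_coord i : \sum_f cube_weight f * (f i : nat)%:R = t i.
Proof.
pose G j (b : bool) := (if b then t j else 1 - t j) * (if j == i then (b : nat)%:R else 1).
transitivity (\sum_(f : {ffun 'I_k -> bool}) \prod_j G j (f j)).
  apply: eq_bigr => f _; rewrite /G big_split /=; congr (_ * _).
  by rewrite (bigD1 i) //= eqxx big1 ?mulr1 // => j /negbTE ->.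
rewrite -bigA_distr_bigA (bigD1 i) //= [X in _ * X]big1 ?mulr1.
  by rewrite big_bool /G eqxx /= mulr1 mulr0 addr0.
by move=> j /negbTE j_i; rewrite big_bool /G j_i !mulr1 /= addrC subrK.
Qed.

End CubeWeight.

Lemma cube_weight_ge0 (R : numDomainType) k (t : 'I_k -> R) f :
  (forall i, 0 <= t i <= 1) -> 0 <= cube_weight t f.
Proof.
move=> t01; apply: prodr_ge0 => i _; have /andP[t_ge0 t_le1] := t01 i.
by case: (f i); rewrite ?subr_ge0.
Qed.

Definition row_set k (z : 'rV[int]_k) (j : 'I_k) (x : int) : 'rV[int]_k :=
  \row_i (if i == j then x else z 0 i).

Lemma row_set_id k (z : 'rV[int]_k) j x : row_set z j x 0 j = x.
Proof. by rewrite mxE eqxx. Qed.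

Lemma row_set_ne k (z : 'rV[int]_k) j x i : i != j -> row_set z j x 0 i = z 0 i.
Proof. by rewrite mxE => /negbTE ->. Qed.

Lemma lattice_step_row_set k (z : 'rV[int]_k) j x :
  absz (x - z 0 j)%R = 1%N -> lattice_step z (row_set z j x).
Proof.
move=> dist1; exists j.
have [dx | dx] : x - z 0 j = 1 \/ x - z 0 j = -1 by lia.
  left; apply/rowP => i; rewrite !mxE eqxx /=.
  by case: eqP => [->|_]; rewrite ?dx ?subrr.
right; apply/rowP => i; rewrite !mxE eqxx /=.
by case: eqP => [->|_]; rewrite ?dx ?subrr ?oppr0.
Qed.

Definition l1dist k (c z : 'rV[int]_k) : nat := (\sum_i absz (z 0 i - c 0 i)%R)%N.

Lemma l1dist_row_set k (c z : 'rV[int]_k) j x :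
  (absz (x - c 0 j)%R < absz (z 0 j - c 0 j)%R)%N ->
  (l1dist c (row_set z j x) < l1dist c z)%N.
Proof.
move=> closer; rewrite /l1dist (bigD1 j) //= [X in (_ < X)%N](bigD1 j) //=.
rewrite row_set_id (eq_bigr (fun i => absz (z 0 i - c 0 i)%R)) ?ltn_add2r //.
by move=> i /row_set_ne ->.
Qed.

Section SlidingBox.

Variables (k : nat) (c0 c1 : 'rV[int]_k).

Definition corner_at (l : rat) i : rat :=
  (c1 0 i)%:~R + l * ((c0 0 i)%:~R - (c1 0 i)%:~R).

Definition in_box_at (l : rat) (z : 'rV[int]_k) :=
  0 <= l <= 1 /\ forall i, corner_at l i <= (z 0 i)%:~R <= corner_at l i + 1.

Let hull := in_conv_hull (fun p => box c0 p \/ box c1 p).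

Lemma conv_hull_in_box_at z : hull (toQ z) -> exists l, in_box_at l z.
Proof.
move=> [n [lam [p [lam_ge0 [Ap [lam_sum1 pz]]]]]].
pose b j := box c0 (p j); exists (\sum_(j | b j) lam j).
split.
  rewrite sumr_ge0 //= -lam_sum1 [X in _ <= X](bigID b) /= lerDl.
  exact: sumr_ge0.
move=> i.
have zi : (z 0 i)%:~R = \sum_j lam j * (p j 0 i)%:~R :> rat.
  have -> : (z 0 i)%:~R = toQ z 0 i :> rat by rewrite mxE.
  by rewrite -pz summxE; apply: eq_bigr => j _; rewrite !mxE.
have corner_sum (e : int) : corner_at (\sum_(j | b j) lam j) i + e%:~R =
    \sum_j lam j * ((if b j then c0 else c1) 0 i + e)%:~R.
  transitivity (\sum_j lam j *
      (if b j then (c0 0 i)%:~R + e%:~R else (c1 0 i)%:~R + e%:~R)).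
    by rewrite sumr_mul_if // /corner_at; ring.
  by apply: eq_bigr => j _; case: (b j); rewrite rmorphD.
have := corner_sum 0; have := corner_sum 1; rewrite rmorph0 rmorph1 addr0 zi => -> ->.
apply/andP; split; apply: ler_sum => j _; apply: ler_wpM2l => //; rewrite ler_int;
  have /forallP/(_ i)/andP[lo hi] : box (if b j then c0 else c1) (p j) by
    rewrite /b; case: ifP => // not_b; case: (Ap j); rewrite ?not_b.
  all: lia.
Qed.

Lemma in_box_at_conv_hull l z : in_box_at l z -> hull (toQ z).
Proof.
move=> [/andP[l_ge0 l_le1] zl].
pose t i := (z 0 i)%:~R - corner_at l i.
have t01 i : 0 <= t i <= 1 by have /andP[] := zl i; rewrite /t; lra.
pose side (b : bool) := if b then l else 1 - l.
pose lam (bf : bool * {ffun 'I_k -> bool}) := side bf.1 * cube_weight t bf.2.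
pose vertex (bf : bool * {ffun 'I_k -> bool}) :=
  (if bf.1 then c0 else c1) + \row_j ((bf.2 j : nat)%:Z).
apply: (@in_conv_hull_finType _ _ _ lam vertex).
- move=> [b f]; apply: mulr_ge0; last exact: cube_weight_ge0.
  by case: b; rewrite /side ?subr_ge0.
- move=> [b f]; have vertex_box c : box c (c + \row_j ((f j : nat)%:Z)).
    by apply/forallP => j; rewrite !mxE; case: (f j) => /=; lia.
  by case: b; [left|right]; apply: vertex_box.
- rewrite -(pair_bigA _ (fun b f => lam (b, f))) big_bool /= /lam /=.
  by rewrite -!mulr_sumr sum_cube_weight /side; ring.
apply/rowP => i; rewrite summxE mxE.
under eq_bigr => bf _ do rewrite mxE.
rewrite -(pair_bigA _ (fun b f => lam (b, f) * toQ (vertex (b, f)) 0 i)) big_bool /=.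
have side_sum (b : bool) : \sum_f lam (b, f) * toQ (vertex (b, f)) 0 i =
    side b * (((if b then c0 else c1) 0 i)%:~R + t i).
  transitivity (\sum_f side b * (cube_weight t f * ((if b then c0 else c1) 0 i)%:~R
                                 + cube_weight t f * (f i : nat)%:R)).
    apply: eq_bigr => f _; rewrite /lam /vertex /= !mxE rmorphD /=.
    have -> : ((f i : nat)%:Z)%:~R = (f i : nat)%:R :> rat by case: (f i).
    ring.
  by rewrite -mulr_sumr big_split /= -mulr_suml sum_cube_weight sum_cube_weight_coord mul1r.
by rewrite !side_sum /side /t /corner_at /=; ring.
Qed.

(* The least l at which coordinate i of z fits the box at corner_at l; the value
   0 when c0 i = c1 i, where every l fits. *)
Definition min_param (z : 'rV[int]_k) i : rat :=
  let a := (c1 0 i)%:~R in let d := (c0 0 i)%:~R - a in let x := (z 0 i)%:~R in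
  if 0 < d then (x - 1 - a) / d else if d < 0 then (x - a) / d else 0.

Lemma min_param_le l z i : in_box_at l z -> min_param z i <= l.
Proof.
move=> [/andP[l_ge0 l_le1] /(_ i)]; rewrite /corner_at /min_param /=.
set a := (c1 0 i)%:~R; set x := (z 0 i)%:~R; set d := (c0 0 i)%:~R - a.
move=> /andP[lo hi]; have [d_gt0|d_lt0|//] := ltrgtP 0 d.
- by rewrite ler_pdivrMr //; nra.
- by rewrite ler_ndivrMr //; nra.
Qed.

Lemma in_box_at_lower l m z : in_box_at l z -> 0 <= m <= l ->
  (forall i, min_param z i <= m) -> in_box_at m z.
Proof.
move=> [/andP[l_ge0 l_le1] zl] /andP[m_ge0 m_le_l] min_le; split.
  by rewrite m_ge0 (le_trans m_le_l).
move=> i; move: (zl i) (min_le i); rewrite /corner_at /min_param /=.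
set a := (c1 0 i)%:~R; set x := (z 0 i)%:~R; set d := (c0 0 i)%:~R - a.
move=> /andP[lo hi]; have [d_gt0|d_lt0|d0] := ltrgtP 0 d.
- by rewrite ler_pdivrMr // => ?; apply/andP; split; nra.
- by rewrite ler_ndivrMr // => ?; apply/andP; split; nra.
- by move=> _; move: lo hi; rewrite -d0 !mulr0 !addr0 => -> ->.
Qed.

Definition descent_move (m : rat) (z : 'rV[int]_k) j (x : int) :=
  [/\ absz (x - z 0 j)%R = 1%N,
     corner_at m j <= x%:~R <= corner_at m j + 1 &
     (absz (x - c1 0 j)%R < absz (z 0 j - c1 0 j)%R)%N].

(* At a positive least parameter the coordinate lies on the face of its box
   that moves away from c1, so stepping it back towards c1 stays in the box. *)
Lemma min_param_step m z j : in_box_at m z -> 0 < m -> min_param z j = m ->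
  exists x, descent_move m z j x.
Proof.
move=> [_ /(_ j)]; rewrite /descent_move /min_param /corner_at /=.
set a := (c1 0 j)%:~R; set d := (c0 0 j)%:~R - a.
move=> /andP[lo hi] m_gt0.
have [d_gt0 mE|d_lt0 mE|_ m0] := ltrgtP 0 d; last by rewrite -m0 ltxx in m_gt0.
- have zm : (z 0 j)%:~R - 1 = a + m * d by rewrite -mE divfK ?gt_eqF //; ring.
  have : 0 < (z 0 j - 1 - c1 0 j)%:~R :> rat by rewrite !rmorphB /= -/a zm; nra.
  rewrite ltr0z => far; exists (z 0 j - 1).
  by split; [lia | rewrite rmorphB /= zm; apply/andP; split; lra | lia].
- have zm : (z 0 j)%:~R = a + m * d by rewrite -mE divfK ?lt_eqF //; ring.
  have : (z 0 j - c1 0 j)%:~R < 0 :> rat by rewrite rmorphB /= -/a zm; nra.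
  rewrite ltrz0 => far; exists (z 0 j + 1).
  by split; [lia | rewrite rmorphD /= zm; apply/andP; split; lra | lia].
Qed.

Lemma base_box_step z : in_box_at 0 z -> z != c1 ->
  exists j x, descent_move 0 z j x.
Proof.
move=> [_ z_box] z_ne_c1.
have [j zj] : exists j, z 0 j != c1 0 j.
  apply/existsP; apply: contraR z_ne_c1 => /existsPn same; apply/eqP/rowP => j.
  by apply/eqP; rewrite -[_ == _]negbK same.
move: (z_box j); rewrite /corner_at !mul0r !addr0 -(rmorphD _ _ 1) !ler_int.
move=> /andP[lo hi]; exists j, (c1 0 j).
by rewrite /descent_move; split; [lia | rewrite /corner_at mul0r addr0 lexx lerDl | lia].
Qed.

Lemma in_box_at_descent l z : in_box_at l z -> z != c1 ->
  exists m z', [/\ in_box_at m z', lattice_step z z' &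
                   (l1dist c1 z' < l1dist c1 z)%N].
Proof.
move=> zl z_ne_c1.
suff [m [j [x [zm [dist1 xm closer]]]]] : exists m j x,
    in_box_at m z /\ descent_move m z j x.
  exists m, (row_set z j x); split; last exact: l1dist_row_set.
  - case: zm => m01 zm; split=> // i.
    by have [->|/row_set_ne ->] := eqVneq i j; rewrite ?row_set_id.
  - exact: lattice_step_row_set.
have [/andP[l_ge0 _] _] := zl.
have [/existsP[j0 pos0]|/existsPn none_pos] := boolP [exists i, 0 < min_param z i].
  pose j := [arg max_(i > j0) min_param z i]%O.
  have [max_j pos_j] : (forall i, min_param z i <= min_param z j) /\ 0 < min_param z j.
    rewrite /j; case: arg_maxP => // i _ max_i; split=> [i'|]; first exact: max_i.
    exact: lt_le_trans pos0 (max_i j0 isT).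
  have zm : in_box_at (min_param z j) z.
    by apply: (in_box_at_lower zl) max_j; rewrite (ltW pos_j) (min_param_le j zl).
  have [x step] := min_param_step zm pos_j erefl.
  by exists (min_param z j), j, x.
have z0 : in_box_at 0 z.
  by apply: (in_box_at_lower zl) => [|i]; rewrite ?lexx ?l_ge0 // leNgt none_pos.
by have [j [x step]] := base_box_step z0 z_ne_c1; exists 0, j, x.
Qed.

End SlidingBox.

Inductive lattice_reach k (S : 'rV[int]_k -> Prop) : 'rV[int]_k -> 'rV[int]_k -> Prop :=
| reach_refl z : S z -> lattice_reach S z z
| reach_step z y w : S z -> lattice_step z y -> lattice_reach S y w -> lattice_reach S z w.

Lemma lattice_reach_trans k (S : 'rV[int]_k -> Prop) x y w :
  lattice_reach S x y -> lattice_reach S y w -> lattice_reach S x w.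
Proof. by elim=> // a b c Sa ab _ IH /IH; apply: reach_step. Qed.

Lemma lattice_step_sym k (a b : 'rV[int]_k) : lattice_step a b -> lattice_step b a.
Proof. by move=> [j [ab|ab]]; exists j; [right|left]; rewrite -opprB ab ?opprK. Qed.

Lemma lattice_reach_path k (S : 'rV[int]_k -> Prop) z w : lattice_reach S z w ->
  exists s, [/\ lattice_path z s, forall y, y \in z :: s -> S y & last z s = w].
Proof.
elim=> [x Sx|a b c Sa ab _ [s [bs Ss bc]]].
  by exists [::]; split=> // y; rewrite inE => /eqP ->.
by exists (b :: s); split=> // y; rewrite inE => /orP[/eqP ->|/Ss].
Qed.

Lemma lattice_path_connected_descent k (S : 'rV[int]_k -> Prop) b
    (f : 'rV[int]_k -> nat) :
  (forall z, S z -> z != b -> exists z', [/\ S z', lattice_step z z' & (f z' < f z)%N]) ->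
  lattice_path_connected S.
Proof.
move=> descent.
have to_b n z : S z -> (f z <= n)%N -> lattice_reach S z b /\ lattice_reach S b z.
  elim: n z => [|n IH] z Sz fz; have [<-|z_ne_b] := eqVneq z b;
    try by split; apply: reach_refl.
    by have [z' [_ _]] := descent z Sz z_ne_b; rewrite ltnNge (leq_trans fz).
  have [z' [Sz' zz' fz']] := descent z Sz z_ne_b.
  have [z'b bz'] := IH z' Sz' (leq_trans fz' fz).
  split; first exact: reach_step Sz zz' z'b.
  apply: lattice_reach_trans bz' _.
  by apply: reach_step Sz' (lattice_step_sym zz') _; apply: reach_refl.
move=> z1 z2 S1 S2.
have [[z1b _] [_ bz2]] := (to_b _ _ S1 (leqnn _), to_b _ _ S2 (leqnn _)).
have [s [z1s Ss <-]] := lattice_reach_path (lattice_reach_trans z1b bz2).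
by exists s; rewrite mem_last.
Qed.

Theorem mainTheorem20 (k : nat) (c0 c1 : 'rV[int]_k) :
  lattice_path_connected
    (fun z : 'rV[int]_k =>
       in_conv_hull (fun p => box c0 p \/ box c1 p) (toQ z)).
Proof.
apply: (@lattice_path_connected_descent _ _ c1 (l1dist c1)) => z Sz z_ne_c1.
have [l zl] := conv_hull_in_box_at Sz.
have [m [z' [z'm zz' closer]]] := in_box_at_descent zl z_ne_c1.
by exists z'; split=> //; apply: in_box_at_conv_hull z'm.
Qed.
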